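(* For $n \ge 8$, let $\mu(n)$ be the minimum number of edges of a connected non-prime graph of order $n$. Then $\mu(n) \le n+1$ if $n$ is even, and $\mu(n) \le n+2$ if $n$ is odd.
   Context: Graphs are finite and simple. A prime labeling of a graph $G$ of order $n$ is a bijection $\alpha: V(G) \to \{1,2,\dots,n\}$ such that $\gcd(\alpha(u),\alpha(v)) = 1$ for every edge $uv \in E(G)$. $G$ is prime if it admits a prime labeling, and non-prime otherwise. *)

From mathcomp Require Import all_boot.
Set Implicit Arguments. Unset Strict Implicit. Unset Printing Implicit Defensive.

Definition simple_graph (n : nat) (e : rel 'I_n) : Prop :=
  symmetric e /\ irreflexive e.

Definition connected_graph (n : nat) (e : rel 'I_n) : Prop :=
  forall x y : 'I_n, connect e x y.

(* number of edges: unordered pairs {u,v} (counted once via u < v) with uv an edge *)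
Definition num_edges (n : nat) (e : rel 'I_n) : nat :=
  #|[set p : 'I_n * 'I_n | (p.1 < p.2)%N && e p.1 p.2]|.

Definition prime_labeling (n : nat) (e : rel 'I_n) (alpha : 'I_n -> nat) : Prop :=
  injective alpha /\
  (forall v, 1 <= alpha v <= n) /\
  (forall k, 1 <= k <= n -> exists v, alpha v = k) /\
  (forall u v, e u v -> coprime (alpha u) (alpha v)).

Definition prime_graph (n : nat) (e : rel 'I_n) : Prop :=
  exists alpha : 'I_n -> nat, prime_labeling e alpha.

From mathcomp Require Import all_boot zify.

Set Implicit Arguments.
Unset Strict Implicit.
Unset Printing Implicit Defensive.

(* The even labels 2, 4, ..., 2 * floor(n/2) are pairwise non-coprime, so in a
   prime labeling they sit on pairwise non-adjacent vertices; hence a graph whose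
   vertices are covered by fewer than floor(n/2) cliques is not prime.  Take the
   path 0 - 1 - ... - (n-1) and turn its first T blocks {3i, 3i+1, 3i+2} into
   triangles (one extra edge each), the remaining vertices being split into
   consecutive pairs, which are already edges of the path.  This connected graph
   has n - 1 + T edges and is covered by T + ceil((n - 3T)/2) cliques, which is
   below floor(n/2) for T = 2 when n is even and for T = 3 when n is odd. *)

Lemma even_not_coprime a b : ~~ odd a -> ~~ odd b -> ~~ coprime a b.
Proof.
rewrite -!dvdn2 => two_a; apply: contraL => /(coprime_dvdl two_a).
by rewrite coprime2n dvdn2 negbK.
Qed.

Section PrimeLabeling.

Variables (n : nat) (e : rel 'I_n) (alpha : 'I_n -> nat).
Hypothesis alpha_prime : prime_labeling e alpha.

Let even_vertices := [set v | ~~ odd (alpha v)].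

Lemma prime_labeling_even_card : n./2 <= #|even_vertices|.
Proof.
have [_ [_ [alpha_onto _]]] := alpha_prime.
have <- : size [seq i.*2 | i <- iota 1 n./2] = n./2 by rewrite size_map size_iota.
rewrite cardE -(size_map alpha); apply: uniq_leq_size.
  by rewrite map_inj_uniq ?iota_uniq //; apply: double_inj.
move=> x /mapP[i]; rewrite mem_iota => i_range ->.
have [|v alpha_v] := alpha_onto i.*2; first by have := odd_double_half n; lia.
by rewrite -alpha_v map_f // mem_enum inE alpha_v odd_double.
Qed.

Lemma prime_labeling_even_class_inj (c : 'I_n -> nat) :
    (forall u v, u != v -> c u = c v -> e u v) ->
  {in even_vertices &, injective c}.
Proof.
have [_ [_ [_ alpha_coprime]]] := alpha_prime.
move=> c_clique u v; rewrite !inE => even_u even_v cuv.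
apply/eqP/negPn/negP => neq_uv.
by have := even_not_coprime even_u even_v; rewrite alpha_coprime ?c_clique.
Qed.

End PrimeLabeling.

Lemma clique_cover_not_prime n k (e : rel 'I_n) (c : 'I_n -> nat) :
    k < n./2 -> (forall v, c v < k) ->
    (forall u v, u != v -> c u = c v -> e u v) ->
  ~ prime_graph e.
Proof.
move=> lt_k_half c_lt_k c_clique [alpha alpha_prime].
have := prime_labeling_even_card alpha_prime.
set E := [set v | _].
have c_inj := prime_labeling_even_class_inj alpha_prime c_clique.
have uniq_classes : uniq (map c (enum E)).
  by rewrite map_inj_in_uniq ?enum_uniq // => u v; rewrite !mem_enum; apply: c_inj.
have classes_lt_k : {subset map c (enum E) <= iota 0 k}.
  by move=> x /mapP[v _ ->]; rewrite mem_iota /= add0n.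
have := uniq_leq_size uniq_classes classes_lt_k.
rewrite size_map size_iota -cardE; lia.
Qed.

Lemma path_connected n (e : rel 'I_n) :
  symmetric e -> (forall u v : 'I_n, u.+1 = v :> nat -> e u v) ->
  connected_graph e.
Proof.
move=> e_sym e_path x y.
have lt0n : 0 < n by case: x => [x]; lia.
pose z0 := Ordinal lt0n.
have from_z0 (z : 'I_n) : connect e z0 z.
  case: z => z; elim: z => [|z IHz] lt_zn.
    by rewrite (_ : Ordinal lt_zn = z0) ?connect0 //; apply: val_inj.
  by apply: connect_trans (IHz (ltnW lt_zn)) (connect1 (e_path _ _ _)).
by apply: connect_trans (from_z0 y); rewrite (sym_connect_sym e_sym).
Qed.

Definition path_cliques n (c : nat -> nat) : rel 'I_n :=
  fun u v => (u != v) && [|| c u == c v, u.+1 == v | v.+1 == u].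

Lemma path_cliques_simple n c : simple_graph (@path_cliques n c).
Proof.
split=> [u v|u]; last by rewrite /path_cliques eqxx.
rewrite /path_cliques eq_sym (eq_sym (c u)).
by congr andb; case: (c v == c u) => //=; rewrite orbC.
Qed.

Lemma path_cliques_connected n c : connected_graph (@path_cliques n c).
Proof.
apply: path_connected => [|u v uv]; first by case: (path_cliques_simple n c).
rewrite /path_cliques uv eqxx orbT andbT.
by apply/eqP => eq_uv; move: uv; rewrite eq_uv; lia.
Qed.

Definition triangle_pair_class (T v : nat) :=
  if v < 3 * T then v %/ 3 else T + (v - 3 * T) %/ 2.

Lemma triangle_pair_class_eq T u v :
  u < v -> triangle_pair_class T u = triangle_pair_class T v ->
  v = u.+1 \/ (v = u.+2 /\ u %% 3 = 0 /\ u < 3 * T).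
Proof. by rewrite /triangle_pair_class; case: ifP; case: ifP; lia. Qed.

Lemma triangle_pair_class_lt n v :
  8 <= n -> v < n -> triangle_pair_class (odd n).+2 v < n./2 - 1.
Proof.
rewrite /triangle_pair_class; have := odd_double_half n.
by case: ifP; case: odd; lia.
Qed.

(* Each edge [u < v] is charged to [u] if [v = u + 1], and to [n - 1 + u / 3]
   if it is the chord [(u, u + 2)] of the triangle number [u / 3 < T]. *)
Lemma num_edges_triangle_pair n T :
  num_edges (@path_cliques n (triangle_pair_class T)) <= n - 1 + T.
Proof.
rewrite /num_edges cardE; set A := enum _.
pose charge (p : 'I_n * 'I_n) :=
  if p.2 == p.1.+1 :> nat then nat_of_ord p.1 else n - 1 + p.1 %/ 3.
have edge_shape (p : 'I_n * 'I_n) : p \in A ->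
    p.1 < p.2 /\
    (p.2 = p.1.+1 :> nat \/ (p.2 = p.1.+2 :> nat /\ p.1 %% 3 = 0 /\ p.1 < 3 * T)).
  case: p => u v; rewrite mem_enum inE /= /path_cliques.
  case/andP=> lt_uv /andP[_ /or3P[/eqP|/eqP|/eqP]]; try lia.
  by split=> //; apply: triangle_pair_class_eq.
have uniq_charges : uniq (map charge A).
  rewrite map_inj_in_uniq ?enum_uniq // => -[u v] [u' v'].
  move=> /edge_shape /= shape_uv /edge_shape /= shape_uv'.
  move: (ltn_ord v) (ltn_ord v'); rewrite /charge /=.
  by case: eqP; case: eqP => /= *; congr pair; apply: ord_inj; lia.
have charges_small : {subset map charge A <= iota 0 (n - 1 + T)}.
  move=> x /mapP[[u v] /edge_shape /= shape_uv ->]; rewrite mem_iota /charge /=.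
  by move: (ltn_ord v); case: eqP; lia.
by have := uniq_leq_size uniq_charges charges_small; rewrite size_map size_iota.
Qed.

Theorem theorem10p3 (n : nat) : 8 <= n ->
  exists e : rel 'I_n,
    simple_graph e /\ connected_graph e /\ ~ prime_graph e /\
    num_edges e <= (if odd n then n + 2 else n + 1).
Proof.
move=> n_ge8; exists (@path_cliques n (triangle_pair_class (odd n).+2)).
split; first exact: path_cliques_simple.
split; first exact: path_cliques_connected.
split; last by have := num_edges_triangle_pair n (odd n).+2; case: odd; lia.
apply: (@clique_cover_not_prime _ (n./2 - 1) _
         (fun v => triangle_pair_class (odd n).+2 v)).
- by have := odd_double_half n; lia.
- by move=> v; apply: triangle_pair_class_lt.
- by move=> u v neq_uv cuv; rewrite /path_cliques neq_uv cuv eqxx.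
Qed.
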